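(* In the graph process described in the context, for every $i\in\{1,\ldots,q\}$, $|E_H^{(i)}|\le|E_H^{(i-1)}|+1$. Consequently $|E_H^{(q)}|\le q$.
   Context: Fix integers $n\ge1$, $h\ge2$, a real $\delta\in(0,1)$ with $\delta n^{1/(h-1)}>3$, and $S=\{1,\ldots,\lfloor\delta n\rfloor\}\subseteq[n]$. Let $(a_1,b_1),\ldots,(a_q,b_q)$ be a sequence of unordered pairs of distinct points of $[n]$, no pair repeated. All graphs are unweighted undirected on vertex set $[n]$; $d_G$ is the shortest-path (edge-count) distance ($\infty$ if disconnected), $\deg_G$ the degree. Graph process: $E_G^{(0)}=\{(u,v): u,v\in[n]\setminus S, u\ne v\}$, $E_H^{(0)}=\emptyset$, $G^{(i)}=([n],E_G^{(i)})$, $H^{(i)}=([n],E_H^{(i)})$. For $i=1,\ldots,q$: if $d_{G^{(i-1)}}(a_i,b_i)\le h$, choose a shortest $a_i$-$b_i$ path $P_i$ in $G^{(i-1)}$, set $E_H^{(i)}=E_H^{(i-1)}\cup\{\text{edges of }P_i\}$ and $E_G^{(i)}=E_G^{(i-1)}\setminus\{(u,v)\in E_G^{(i-1)}\setminus E_H^{(i)}: \deg_{H^{(i)}}(u)\ge\delta n^{1/(h-1)}-2\text{ or }\deg_{H^{(i)}}(v)\ge\delta n^{1/(h-1)}-2\}$; otherwise set $E_H^{(i)}=E_H^{(i-1)}$, $E_G^{(i)}=E_G^{(i-1)}$. *)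

From mathcomp Require Import all_boot.
From Stdlib Require Import Reals.
Set Implicit Arguments. Unset Strict Implicit. Unset Printing Implicit Defensive.

(* Vertices [n] are modelled by 'I_n (vertex v : 'I_n stands for v+1 in [n]).
   An (unordered) edge is a 2-element set of vertices; an edge set is a
   {set {set 'I_n}}. *)

Definition adj n (E : {set {set 'I_n}}) (u v : 'I_n) : bool :=
  (u != v) && ([set u; v] \in E).

(* a walk from a to b: the vertex list a :: p, consecutive vertices adjacent;
   its length (number of edges) is size p *)
Definition walk n (E : {set {set 'I_n}}) (a b : 'I_n) (p : seq 'I_n) : bool :=
  path (adj E) a p && (last a p == b).

Definition dist_le n (E : {set {set 'I_n}}) (a b : 'I_n) (k : nat) : Prop :=
  exists p, walk E a b p /\ size p <= k.

Definition is_shortest n (E : {set {set 'I_n}}) (a b : 'I_n) (p : seq 'I_n) : Prop :=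
  walk E a b p /\ forall p', walk E a b p' -> size p <= size p'.

Definition path_edges n (a : 'I_n) (p : seq 'I_n) : {set {set 'I_n}} :=
  [set:: [seq [set x.1; x.2] | x <- zip (a :: p) p]].

Definition deg n (E : {set {set 'I_n}}) (v : 'I_n) : nat := #|[set e in E | v \in e]|.

Definition thr (delta : R) (n h : nat) : R :=
  Rmult delta (Rpower (INR n) (Rinv (Rminus (INR h) 1))).

(* S = {1,...,floor(delta n)}: vertex v (i.e. v+1 in [n]) is in S iff v+1 <= delta n *)
Definition inS (delta : R) n (v : 'I_n) : Prop := Rle (INR v.+1) (Rmult delta (INR n)).

Definition initial_G (delta : R) n (EG0 : {set {set 'I_n}}) : Prop :=
  forall e : {set 'I_n}, e \in EG0 <-> (#|e| = 2 /\ forall v, v \in e -> ~ inS delta v).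

(* one step of the process on the pair (a,b); the shortest path is an arbitrary choice *)
Definition process_step n h (delta : R)
    (EG EH EG' EH' : {set {set 'I_n}}) (a b : 'I_n) : Prop :=
  (dist_le EG a b h ->
     exists p, is_shortest EG a b p /\
       EH' = EH :|: path_edges a p /\
       (forall e, e \in EG' <->
          (e \in EG /\
           ~ (e \notin EH' /\
              exists v, v \in e /\ Rle (Rminus (thr delta n h) 2) (INR (deg EH' v))))))
  /\ (~ dist_le EG a b h -> EH' = EH /\ EG' = EG).

From mathcomp Require Import all_boot zify.
From Stdlib Require Import Reals Lra Classical.

Set Implicit Arguments.
Unset Strict Implicit.

(* Edges of H are never deleted from G, and a G-edge is deleted only once one of
   its endpoints is saturated (degree in H at least delta n^(1/(h-1)) - 2).
   Hence, throughout the process, an edge of G not yet in H has two unsaturated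
   endpoints, while two vertices lying on edges of G but not joined in G have a
   saturated one.  Now let P be a shortest a-b path in G with two edges x x' and y' y
   outside H, x' preceding y' along P.  Then x and y are unsaturated, so they
   are adjacent in G, and jumping from x to y shortens P.  So each step adds at
   most one edge to H. *)

Section SeqFacts.

Variable T : Type.
Implicit Types (a : T) (p : seq T).

Lemma last_take_nth a p i :
  i <= size p -> last a (take i p) = nth a (a :: p) i.
Proof.
move=> hi; rewrite (last_nth a) size_take.
case: ltnP => hi'; last by rewrite (_ : i = size p) ?take_size //; lia.
by case: i hi hi' => [|k] //= hi hi'; rewrite nth_take.
Qed.

Lemma path_drop_nth (r : rel T) a p j :
  j <= size p -> path r a p -> path r (nth a (a :: p) j) (drop j p).
Proof.
move=> hj; rewrite -{1}(cat_take_drop j p) cat_path => /andP[_].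
by rewrite last_take_nth.
Qed.

Lemma last_drop_nth a p j :
  j <= size p -> last (nth a (a :: p) j) (drop j p) = last a p.
Proof. by move=> hj; rewrite -[in RHS](cat_take_drop j p) last_cat last_take_nth. Qed.

End SeqFacts.

Lemma path_edgesP n (a : 'I_n) p e :
  reflect (exists2 j, j < size p & e = [set nth a (a :: p) j; nth a (a :: p) j.+1])
          (e \in path_edges a p).
Proof.
rewrite /path_edges inE; apply: (iffP idP).
  elim: p a => [|x p IH] a //=.
  rewrite in_cons => /orP[/eqP->|/IH [j hj ->]]; first by exists 0.
  by exists j.+1; rewrite //= !(set_nth_default x a) //= ltnS ltnW.
case=> j; elim: p a j => [|x p IH] a [|j] //= hj he; first by rewrite he mem_head.
rewrite in_cons; apply/orP; right; rewrite ltnS in hj.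
by apply: (IH x j hj); rewrite he !(set_nth_default x a) //= ltnW.
Qed.

Section Walks.

Variables (n : nat) (E : {set {set 'I_n}}).

Lemma walk_edge a b p j :
  walk E a b p -> j < size p -> [set nth a (a :: p) j; nth a (a :: p) j.+1] \in E.
Proof. by case/andP=> hp _ hj; case/andP: ((pathP a hp) j hj). Qed.

Lemma walk_splice a b p i j q :
  walk E a b p -> i <= j -> j <= size p ->
  path (adj E) (nth a (a :: p) i) q -> last (nth a (a :: p) i) q = nth a (a :: p) j ->
  walk E a b (take i p ++ q ++ drop j p).
Proof.
move=> /andP[hp /eqP hl] hij hj hq hlq.
have hi : i <= size p by apply: leq_trans hj.
apply/andP; split.
  by rewrite !cat_path (take_path _ hp) last_take_nth // hq hlq path_drop_nth.
by rewrite !last_cat last_take_nth // hlq last_drop_nth // hl.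
Qed.

Lemma size_splice (p q : seq 'I_n) i j :
  i <= j -> j <= size p -> size (take i p ++ q ++ drop j p) = i + size q + (size p - j).
Proof. by move=> hij hj; rewrite !size_cat size_takel ?size_drop ?addnA //; lia. Qed.

Lemma shortest_nth_neq a b p i j :
  is_shortest E a b p -> i < j -> j <= size p -> nth a (a :: p) i != nth a (a :: p) j.
Proof.
move=> [hw hmin] hij hj; apply/eqP => heq.
have := hmin _ (walk_splice (q := [::]) hw (ltnW hij) hj isT heq).
by rewrite size_splice ?(ltnW hij) //=; lia.
Qed.

Lemma shortest_nth_nadj a b p i j :
  is_shortest E a b p -> i.+1 < j -> j <= size p ->
  ~~ adj E (nth a (a :: p) i) (nth a (a :: p) j).
Proof.
move=> [hw hmin] hij hj; apply/negP => hadj.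
have hq : path (adj E) (nth a (a :: p) i) [:: nth a (a :: p) j] by rewrite /= hadj.
have := hmin _ (walk_splice hw (ltnW (ltnW hij)) hj hq erefl).
by rewrite size_splice ?(ltnW (ltnW hij)) //=; lia.
Qed.

End Walks.

Lemma deg_subset n (E E' : {set {set 'I_n}}) v : E \subset E' -> deg E v <= deg E' v.
Proof.
move=> sEE'; apply/subset_leq_card/subsetP => e.
by rewrite !inE => /andP[/(subsetP sEE') -> ->].
Qed.

Section Invariant.

Variables (n h : nat) (delta : R).
Implicit Types (EG EH : {set {set 'I_n}}) (u v : 'I_n).

Definition saturated EH v : Prop := Rle (Rminus (thr delta n h) 2) (INR (deg EH v)).

Definition covered (E : {set {set 'I_n}}) v : Prop := exists2 e, e \in E & v \in e.

Record process_inv EG EH : Prop := {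
  unused_unsaturated : forall e v, e \in EG -> e \notin EH -> v \in e -> ~ saturated EH v;
  missing_saturated : forall u v, u != v -> covered EG u -> covered EG v ->
    [set u; v] \notin EG -> saturated EH u \/ saturated EH v
}.

Lemma saturated_subset EH EH' v : EH \subset EH' -> saturated EH v -> saturated EH' v.
Proof. by move=> sub hv; apply/(Rle_trans _ _ _ hv)/le_INR/leP/deg_subset. Qed.

Lemma process_inv0 EG0 :
  initial_G delta EG0 -> Rlt 3 (thr delta n h) -> process_inv EG0 set0.
Proof.
move=> hG hthr; split.
  move=> e v _ _ _; rewrite /saturated (_ : deg set0 v = 0) /=; first lra.
  by apply/eqP; rewrite cards_eq0; apply/eqP/setP => x; rewrite !inE.
have outS w : covered EG0 w -> ~ inS delta w by case=> e /hG[_]; apply.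
move=> u v huv /outS hu /outS hv /negP[]; apply/hG; split; first by rewrite cards2 huv.
by move=> w /set2P[]->.
Qed.

Lemma process_step_inv EG EH EG' EH' a b :
  process_inv EG EH -> process_step h delta EG EH EG' EH' a b -> process_inv EG' EH'.
Proof.
move=> [I1 I2] [Hd Hnd].
have [hd|hd] := classic (dist_le EG a b h); last by have [-> ->] := Hnd hd.
have [p [_ [hEH hEG']]] := Hd hd.
have sub : EH \subset EH' by rewrite hEH subsetUl.
have sGG' e : e \in EG' -> e \in EG by case/hEG'.
split.
  by move=> e v /hEG'[_ hkeep] hne hv hsat; apply: hkeep; split=> //; exists v.
have covG w : covered EG' w -> covered EG w by case=> e /sGG'; exists e.
move=> u v huv /covG cu /covG cv hn.
have [hin|hin] := boolP ([set u; v] \in EG); last first.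
  by case: (I2 u v huv cu cv hin) => hs; [left|right]; apply: saturated_subset hs.
apply: NNPP => hno; move/negP: hn; apply; apply/hEG'; split=> //.
by case=> _ [w [/set2P[]-> hw]]; apply: hno; [left|right].
Qed.

Lemma shortest_new_edges EG EH a b p :
  process_inv EG EH -> is_shortest EG a b p -> #|path_edges a p :\: EH| <= 1.
Proof.
move=> [I1 I2] hs; have [hw _] := hs.
pose s k := nth a (a :: p) k.
suff no2 j1 j2 : j1 < j2 -> j2 < size p ->
    [set s j1; s j1.+1] \notin EH -> [set s j2; s j2.+1] \notin EH -> False.
  apply/card_le1_eqP => x y /setDP[/path_edgesP[j1 hj1 ->] hx] /setDP[/path_edgesP[j2 hj2 ->] hy].
  by case: (ltngtP j1 j2) => [hlt|hlt|->] //; exfalso; [apply: (no2 j1 j2) | apply: (no2 j2 j1)].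
move=> hlt hj2 hn1 hn2.
have e1G := walk_edge hw (ltn_trans hlt hj2); have e2G := walk_edge hw hj2.
have lo1 : ~ saturated EH (s j1) by apply: I1 e1G hn1 _; rewrite !inE eqxx.
have lo2 : ~ saturated EH (s j2.+1) by apply: I1 e2G hn2 _; rewrite !inE eqxx orbT.
have cov1 : covered EG (s j1) by exists [set s j1; s j1.+1]; rewrite ?inE ?eqxx.
have cov2 : covered EG (s j2.+1) by exists [set s j2; s j2.+1]; rewrite ?inE ?eqxx ?orbT.
have hneq := shortest_nth_neq hs (ltnW hlt : j1 < j2.+1) hj2.
have hnadj := shortest_nth_nadj hs (hlt : j1.+1 < j2.+1) hj2.
have [hin|hout] := boolP ([set s j1; s j2.+1] \in EG).
  by move/negP: hnadj; apply; rewrite /adj hneq hin.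
by case: (I2 _ _ hneq cov1 cov2 hout).
Qed.

Lemma process_step_card EG EH EG' EH' a b :
  process_inv EG EH -> process_step h delta EG EH EG' EH' a b -> #|EH'| <= #|EH| + 1.
Proof.
move=> hI [Hd Hnd].
have [hd|hd] := classic (dist_le EG a b h); last by have [-> _] := Hnd hd; rewrite leq_addr.
have [p [hs [-> _]]] := Hd hd.
have := shortest_new_edges hI hs; have := cardsID EH (path_edges a p).
rewrite cardsU setIC; lia.
Qed.

End Invariant.

Theorem mainTheorem8 (n h q : nat) (delta : R) (pa pb : nat -> 'I_n)
    (EG EH : nat -> {set {set 'I_n}}) :
  1 <= n -> 2 <= h -> Rlt 0 delta -> Rlt delta 1 -> Rlt 3 (thr delta n h) ->
  (forall i, 1 <= i <= q -> pa i != pb i) ->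
  (forall i j, 1 <= i <= q -> 1 <= j <= q -> i != j ->
     [set pa i; pb i] != [set pa j; pb j]) ->
  initial_G delta (EG 0) -> EH 0 = set0 ->
  (forall i, 1 <= i <= q ->
     process_step h delta (EG i.-1) (EH i.-1) (EG i) (EH i) (pa i) (pb i)) ->
  (forall i, 1 <= i <= q -> #|EH i| <= #|EH i.-1| + 1) /\ #|EH q| <= q.
Proof.
move=> _ _ _ _ hthr _ _ hG0 hH0 hstep.
have inv i : i <= q -> process_inv h delta (EG i) (EH i).
  elim: i => [|i IH] hi; first by rewrite hH0; apply: process_inv0.
  exact: process_step_inv (IH (ltnW hi)) (hstep i.+1 hi).
have grow i : 1 <= i <= q -> #|EH i| <= #|EH i.-1| + 1.
  case: i => [//|i] /= hi; exact: process_step_card (inv i (ltnW hi)) (hstep i.+1 hi).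
split=> //; suff : forall i, i <= q -> #|EH i| <= i by apply.
elim=> [|i IH] hi; first by rewrite hH0 cards0.
by apply: leq_trans (grow i.+1 hi) _; rewrite addn1 ltnS IH // ltnW.
Qed.
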